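(* Let $K$ be a good triangulation of $P^n$ and $\sigma\in K$ a simplex with $\sigma\cap\mathbf H^n\neq\emptyset$. If $\sigma\cap\mathbf H_h=\emptyset$, then there is a unique $H_{i,\alpha}$ ($1\le i\le n$, $\alpha\in\{0,\infty\}$) such that $\sigma\cap\mathbf H^n\subset H_{i,\alpha}$, and moreover $\sigma\cap H'=\emptyset$ for every cubical face $H'$ other than $H_{i,\alpha}$.
   Context: $P^n=(\mathbb P^1_{\mathbb C})^n$ with coordinates $z_i$; $H_{i,\alpha}=\{z_i=\alpha\}$, $\alpha\in\{0,\infty\}$; a cubical face is a nonempty intersection of one or more of the $H_{i,\alpha}$; $\mathbf H^n=\bigcup H_{i,\alpha}$; $\mathbf H_h=\bigcup_{i<i',\alpha,\beta}(H_{i,\alpha}\cap H_{i',\beta})$; $\mathbf D^n=\bigcup_i\{z_i=1\}$. A good triangulation is a finite simplicial complex $K$ with a semi-algebraic homeomorphism $|K|\cong P^n$ (identifying them) such that $\mathbf D^n$ is a subcomplex, the image of each open simplex is a regular submanifold, every finite union of cubical faces is a full subcomplex (any simplex of $K$ whose vertices all lie in it belongs to it), and each $\{|z_i|\le1\}$ is a subcomplex. *)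

From HB Require Import structures.
From mathcomp Require Import all_boot all_order all_algebra.
From mathcomp Require Import boolp classical_sets reals.
From Stdlib Require List.

Set Implicit Arguments.
Unset Strict Implicit.
Unset Printing Implicit Defensive.

Import Order.TTheory GRing.Theory Num.Theory.
Local Open Scope ring_scope.
Local Open Scope classical_set_scope.

Inductive zinf := Zero | Infty.

Section Defs.
Variable R : realType.

(* complex numbers as pairs (a, b) = a + b i *)
Definition CC := (R * R)%type.
(* P^1_C = C ∪ {oo}; None is the point at infinity *)
Definition P1 := option CC.
(* P^n = (P^1)^n, coordinates z_i indexed by i : 'I_n (i.e. 0..n-1) *)
Definition Pn (n : nat) := 'I_n -> P1.

Definition zval (a : zinf) : P1 :=
  match a with Zero => Some (0, 0) | Infty => None end.

Definition Hface (n : nat) (i : 'I_n) (a : zinf) : set (Pn n) :=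
  [set z | z i = zval a].

Definition Hn (n : nat) : set (Pn n) :=
  [set z | exists (i : 'I_n) (a : zinf), Hface i a z].

Definition Hh (n : nat) : set (Pn n) :=
  [set z | exists (i i' : 'I_n) (a b : zinf),
      (i < i')%N /\ Hface i a z /\ Hface i' b z].

Definition Dn (n : nat) : set (Pn n) :=
  [set z | exists i : 'I_n, z i = Some (1, 0)].

Definition unit_disc (n : nat) (i : 'I_n) : set (Pn n) :=
  [set z | exists a b : R, z i = Some (a, b) /\ a ^+ 2 + b ^+ 2 <= 1].

Definition cubical_face (n : nat) (A : set (Pn n)) : Prop :=
  exists F : seq ('I_n * zinf),
    F <> [::] /\
    A = [set z | forall p, List.In p F -> Hface p.1 p.2 z] /\
    A !=set0.

(* Topology of P^1_C: pulled back along the inverse stereographic projection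
   P^1_C -> S^2 ⊂ R^3 (the Riemann sphere / chordal metric topology). *)
Definition sph (z : P1) : R * R * R :=
  match z with
  | None => (0, 0, 1)
  | Some (a, b) =>
      let r := a ^+ 2 + b ^+ 2 in
      (2 * a / (r + 1), 2 * b / (r + 1), (r - 1) / (r + 1))
  end.

Definition dP1 (z w : P1) : R :=
  `|(sph z).1.1 - (sph w).1.1| + `|(sph z).1.2 - (sph w).1.2|
  + `|(sph z).2 - (sph w).2|.

Definition dPn (n : nat) (z w : Pn n) : R := \sum_(i < n) dP1 (z i) (w i).

Definition dV (V : finType) (x y : V -> R) : R := \sum_(v : V) `|x v - y v|.

Definition cont_on (X Y : Type) (dX : X -> X -> R) (dY : Y -> Y -> R)
    (A : set X) (f : X -> Y) : Prop :=
  forall x, A x -> forall e : R, 0 < e ->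
    exists2 d : R, 0 < d &
      forall y, A y -> dX x y < d -> dY (f x) (f y) < e.

Definition simplicial_complex (V : finType) (K : {set {set V}}) : Prop :=
  @finset.set0 V \notin K /\
  (forall s t : {set V}, s \in K -> t \subset s -> t != @finset.set0 V -> t \in K).

Definition csimplex (V : finType) (s : {set V}) : set (V -> R) :=
  [set x | (forall v, 0 <= x v) /\ \sum_(v : V) x v = 1 /\
           (forall v, v \notin s -> x v = 0)].

Definition realization (V : finType) (K : {set {set V}}) : set (V -> R) :=
  [set x | exists2 s, s \in K & csimplex s x].

Definition vertex_pt (V : finType) (v : V) : V -> R :=
  fun w => (w == v)%:R.

Definition homeo (V : finType) (n : nat) (A : set (V -> R))
    (h : (V -> R) -> Pn n) : Prop :=
  exists g : Pn n -> (V -> R),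
    (forall x, A x -> g (h x) = x) /\
    (forall z, A (g z) /\ h (g z) = z) /\
    cont_on (@dV V) (@dPn n) A h /\
    cont_on (@dPn n) (@dV V) setT g.

Definition simplex_img (V : finType) (n : nat) (h : (V -> R) -> Pn n)
    (s : {set V}) : set (Pn n) := h @` csimplex s.

Definition subcomplex_by (V : finType) (n : nat) (K : {set {set V}})
    (h : (V -> R) -> Pn n) (A : set (Pn n)) (L : {set {set V}}) : Prop :=
  L \subset K /\
  (forall s t : {set V}, s \in L -> t \subset s -> t != @finset.set0 V -> t \in L) /\
  A = [set z | exists2 s, s \in L & simplex_img h s z].

Definition is_subcomplex (V : finType) (n : nat) (K : {set {set V}})
    (h : (V -> R) -> Pn n) (A : set (Pn n)) : Prop :=
  exists L, subcomplex_by K h A L.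

Definition is_full_subcomplex (V : finType) (n : nat) (K : {set {set V}})
    (h : (V -> R) -> Pn n) (A : set (Pn n)) : Prop :=
  exists L, subcomplex_by K h A L /\
    (forall s, s \in K -> (forall v, v \in s -> A (h (vertex_pt v))) ->
       s \in L).

Definition union_list (n : nat) (Fs : seq (set (Pn n))) : set (Pn n) :=
  [set z | exists2 A, List.In A Fs & A z].

Definition good_triangulation (V : finType) (n : nat) (K : {set {set V}})
    (h : (V -> R) -> Pn n) : Prop :=
  simplicial_complex K /\
  homeo (realization K) h /\
  is_subcomplex K h (@Dn n) /\
  (forall Fs : seq (set (Pn n)), (forall A, List.In A Fs -> cubical_face A) ->
      is_full_subcomplex K h (union_list Fs)) /\
  (forall i : 'I_n, is_subcomplex K h (unit_disc i)).

End Defs.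

(* Since the image [σ] of the simplex misses [H_h], every point of [σ ∩ H^n] lies
   on exactly one face [H_{j,β}].  Two points of [σ ∩ H^n] lie in simplices of the
   full subcomplex [H^n = ⋃ H_{j,β}]; by fullness, the face of [s] spanned by the
   vertices of their carriers belongs to that subcomplex too, so the image of the
   segment joining the two points stays in [σ ∩ H^n].  Along this path the faces
   [H_{j,β}] cut [[0,1]] into finitely many pairwise disjoint closed sets, so by
   connectedness the face does not change.  Finally, a cubical face meeting [σ] is
   an intersection of faces [H_{j,β}], each of which must be that unique face. *)

From HB Require Import structures.
From mathcomp Require Import all_boot all_order all_algebra.
From mathcomp Require Import boolp classical_sets cardinality set_interval reals.
From mathcomp Require Import topology normedtype.
From mathcomp Require Import ring lra.
Import Order.TTheory GRing.Theory Num.Theory numFieldNormedType.Exports.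
Set Implicit Arguments.
Unset Strict Implicit.
Unset Printing Implicit Defensive.
Local Open Scope ring_scope.
Local Open Scope classical_set_scope.

Definition bool_of_zinf (a : zinf) : bool := if a is Infty then true else false.
Definition zinf_of_bool (b : bool) : zinf := if b then Infty else Zero.
Lemma bool_of_zinfK : cancel bool_of_zinf zinf_of_bool. Proof. by case. Qed.
HB.instance Definition _ := Finite.copy zinf (can_type bool_of_zinfK).

Section UnitInterval.
Variable R : realType.

Lemma itv01_closed_partition (I : finType) (C : I -> set R) (i : I) :
  (forall j, closed (C j)) ->
  (forall t, 0 <= t <= 1 -> exists j, C j t) ->
  (forall j k t, C j t -> C k t -> j = k) ->
  C i 0 -> C i 1.
Proof.
move=> clC cover disj Ci0.
set A := [set t : R | 0 <= t <= 1].
have A0 : A 0 by rewrite /A /= lexx ler01.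
have A1 : A 1 by rewrite /A /= lexx ler01.
suff eqA : A `&` C i = A by move: A1; rewrite -eqA => -[].
have cA : connected A.
  by apply/connected_intervalP; rewrite /A -set_itvcc; exact: interval_is_interval.
apply: cA; [by exists 0| |by exists (C i)].
exists (~` \bigcup_(j in [set j | j != i]) C j).
  by rewrite openC; apply: closed_bigcup => //; exact: finite_finset.
apply/seteqP; split=> t [At Ct]; split => //.
  by move=> [j /= ji Cjt]; move: ji; rewrite (disj _ _ _ Cjt Ct) eqxx.
have [j Cjt] := cover t At.
by have [<-|ji] := eqVneq j i; last by exfalso; apply: Ct; exists j.
Qed.

Lemma closed_zeroset (A : set R) (phi : R -> R) : closed A ->
  cont_on (fun t u : R => `|t - u|) (fun a b : R => `|a - b|) A phi ->
  closed (A `&` phi @^-1` [set 0]).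
Proof.
move=> clA cphi t clt.
have At : A t by apply: clA; apply: closureS clt; exact: subIsetl.
split => //=; apply: contrapT => /eqP phit0.
have phit_gt0 : 0 < `|phi t| by rewrite normr_gt0.
have [d d0 near_t] := cphi t At _ phit_gt0.
have [u [[Au /= phiu0] tu]] := clt _ (nbhsx_ballx t d d0).
move: tu; rewrite -ball_normE /ball_ /= => /(near_t u Au).
by rewrite phiu0 subr0 ltxx.
Qed.
End UnitInterval.

Section RiemannSphere.
Variable R : realType.
Implicit Types a b c : P1 R.

Lemma dP1_ge0 a b : 0 <= dP1 a b.
Proof. by rewrite /dP1 !addr_ge0. Qed.

Lemma dP1xx a : dP1 a a = 0.
Proof. by rewrite /dP1 !subrr normr0 !addr0. Qed.

Lemma dP1C a b : dP1 a b = dP1 b a.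
Proof. by rewrite /dP1 (distrC (sph a).1.1) (distrC (sph a).1.2) (distrC (sph a).2). Qed.

Lemma dP1_triangle a b c : dP1 a c <= dP1 a b + dP1 b c.
Proof.
have := ler_distD (sph b).1.1 (sph a).1.1 (sph c).1.1.
have := ler_distD (sph b).1.2 (sph a).1.2 (sph c).1.2.
have := ler_distD (sph b).2 (sph a).2 (sph c).2.
rewrite /dP1; lra.
Qed.

Lemma dP1_lipschitz a b c : `|dP1 a c - dP1 b c| <= dP1 a b.
Proof.
have := dP1_triangle a b c; have := dP1_triangle b a c.
by rewrite ler_norml (dP1C b a); lra.
Qed.

Lemma sph_inj : injective (@sph R).
Proof.
have r1_gt0 (x y : R) : 0 < x ^+ 2 + y ^+ 2 + 1.
  by rewrite ltr_wpDl // addr_ge0 // sqr_ge0.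
case=> [[x y]|] [[x' y']|] //= [].
- set r := x ^+ 2 + y ^+ 2; set r' := x' ^+ 2 + y' ^+ 2.
  have r1 : 0 < r + 1 := r1_gt0 x y.
  have r1' : 0 < r' + 1 := r1_gt0 x' y'.
  move=> e1 e2 e3.
  have rr' : r = r'.
    move/eqP: e3; rewrite eqr_div ?lt0r_neq0 // => /eqP; lra.
  rewrite -rr' in e1 e2; have r1n0 := lt0r_neq0 r1.
  move/(congr1 ( *%R^~ (r + 1))): e1; rewrite !mulfVK // => e1.
  move/(congr1 ( *%R^~ (r + 1))): e2; rewrite !mulfVK // => e2.
  by congr (Some (_, _)); lra.
- move=> _ _ e3; exfalso; have r1 := lt0r_neq0 (r1_gt0 x y).
  move/(congr1 ( *%R^~ (x ^+ 2 + y ^+ 2 + 1))): e3; rewrite mulfVK // mul1r; lra.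
- move=> _ _ /esym e3; exfalso; have r1 := lt0r_neq0 (r1_gt0 x' y').
  move/(congr1 ( *%R^~ (x' ^+ 2 + y' ^+ 2 + 1))): e3; rewrite mulfVK // mul1r; lra.
Qed.

Lemma dP1_eq0 a b : dP1 a b = 0 -> a = b.
Proof.
rewrite /dP1 => ab0; apply: sph_inj; move: ab0.
case: (sph a) (sph b) => [[u1 u2] u3] [[v1 v2] v3] /= sum0.
have := normr_ge0 (u1 - v1); have := normr_ge0 (u2 - v2).
have := normr_ge0 (u3 - v3) => n3 n2 n1.
have eq_of_dist0 (u v : R) : `|u - v| = 0 -> u = v by move/normr0_eq0/subr0_eq.
have e1 : u1 = v1 by apply: eq_of_dist0; lra.
have e2 : u2 = v2 by apply: eq_of_dist0; lra.
have e3 : u3 = v3 by apply: eq_of_dist0; lra.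
by rewrite e1 e2 e3.
Qed.
End RiemannSphere.

Section ContinuousOn.
Variable R : realType.

Lemma cont_on_comp (X Y Z : Type) (dX : X -> X -> R) (dY : Y -> Y -> R)
    (dZ : Z -> Z -> R) (A : set X) (B : set Y) (f : X -> Y) (g : Y -> Z) :
  (forall x, A x -> B (f x)) -> cont_on dX dY A f -> cont_on dY dZ B g ->
  cont_on dX dZ A (g \o f).
Proof.
move=> fAB cf cg x Ax e e0.
have [d1 d10 near_fx] := cg (f x) (fAB x Ax) e e0.
have [d d0 near_x] := cf x Ax d1 d10.
by exists d => // y Ay /(near_x y Ay) /(near_fx _ (fAB y Ay)).
Qed.

End ContinuousOn.

Section Simplices.
Variables (R : realType) (V : finType).
Implicit Types (s t : {set V}) (x y : V -> R).

Lemma csimplexS s t x : t \subset s -> csimplex t x -> csimplex s x.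
Proof.
move=> ts [x_ge0 [sumx1 x_out]]; split => //; split => // v vs; apply: x_out.
by apply: contra vs => /(fintype.subsetP ts).
Qed.

Lemma csimplexI s t x : csimplex s x -> csimplex t x -> csimplex (s :&: t) x.
Proof.
move=> [x_ge0 [sumx1 xs_out]] [_ [_ xt_out]]; split => //; split => // v.
by rewrite inE negb_and => /orP[]; [exact: xs_out|exact: xt_out].
Qed.

Lemma csimplex_neq0 s x : csimplex s x -> s != finset.set0.
Proof.
move=> [_ [sumx1 x_out]]; apply/negP => /eqP s0.
have : \sum_v x v = 0 by apply: big1 => v _; apply: x_out; rewrite s0 inE.
by rewrite sumx1 => /eqP; rewrite oner_eq0.
Qed.

Lemma csimplex_vertex s v : v \in s -> csimplex s (vertex_pt R v).
Proof.
rewrite /vertex_pt => vs; split; first by move=> w; rewrite ler0n.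
split; first by rewrite (bigD1 v) //= eqxx big1 ?addr0 // => w /negbTE->.
by move=> w; case: eqP => // ->; rewrite vs.
Qed.

Definition lerp x y (t : R) : V -> R := fun v => (1 - t) * x v + t * y v.

Lemma lerp0 x y : lerp x y 0 = x.
Proof. by apply/funext => v; rewrite /lerp subr0 mul1r mul0r addr0. Qed.

Lemma lerp1 x y : lerp x y 1 = y.
Proof. by apply/funext => v; rewrite /lerp subrr mul0r add0r mul1r. Qed.

Lemma csimplex_lerp s x y (t : R) : csimplex s x -> csimplex s y ->
  0 <= t <= 1 -> csimplex s (lerp x y t).
Proof.
move=> [x_ge0 [sumx1 x_out]] [y_ge0 [sumy1 y_out]] /andP[t0 t1]; split.
  by move=> v; have := x_ge0 v; have := y_ge0 v; rewrite /lerp; nra.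
split; first by rewrite big_split /= -!mulr_sumr sumx1 sumy1 !mulr1 subrK.
by move=> v vs; rewrite /lerp x_out // y_out // !mulr0 addr0.
Qed.

Lemma dV_lerp s x y (t u : R) : csimplex s x -> csimplex s y ->
  dV (lerp x y t) (lerp x y u) <= `|t - u| * 2.
Proof.
move=> [x_ge0 [sumx1 _]] [y_ge0 [sumy1 _]]; rewrite /dV /lerp.
under eq_bigr => v _.
  rewrite (_ : _ - _ = (t - u) * (y v - x v)); last by ring.
  rewrite normrM; over.
rewrite -mulr_sumr ler_wpM2l //.
apply: le_trans (_ : _ <= \sum_v (y v + x v)) _; last by rewrite big_split /= sumx1 sumy1.
by apply: ler_sum => v _; apply: le_trans (ler_normB _ _) _; rewrite !ger0_norm.
Qed.

Lemma cont_on_lerp s x y : csimplex s x -> csimplex s y ->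
  cont_on (fun t u : R => `|t - u|) (@dV R V) [set t | 0 <= t <= 1] (lerp x y).
Proof.
move=> sx sy t _ e e0; exists (e / 2); first by rewrite divr_gt0.
move=> u _ tu; apply: le_lt_trans (dV_lerp t u sx sy) _.
by rewrite -ltr_pdivlMr.
Qed.

Lemma homeo_inj n (A : set (V -> R)) (h : (V -> R) -> Pn R n) x y :
  homeo A h -> A x -> A y -> h x = h y -> x = y.
Proof. by case=> g [gh _] /gh {2}<- /gh {2}<- ->. Qed.

End Simplices.

Lemma mem_In (T : eqType) (x : T) (s : seq T) : x \in s -> List.In x s.
Proof. by elim: s => //= y s IHs; rewrite in_cons => /predU1P[->|/IHs]; [left|right]. Qed.

Section Faces.
Variables (R : realType) (n : nat).
Implicit Types (z : Pn R n) (i j : 'I_n) (a b : zinf).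

Lemma zval_inj : injective (@zval R).
Proof. by case; case. Qed.

Lemma Hface_uniq z i a j b :
  ~ Hh z -> Hface i a z -> Hface j b z -> (i, a) = (j, b).
Proof.
rewrite /Hface /= => notHh zia zjb.
case: (ltngtP i j) => [ij|ji|/val_inj ij].
- by exfalso; apply: notHh; exists i, j, a, b.
- by exfalso; apply: notHh; exists j, i, b, a.
- by subst j; congr (_, _); apply: zval_inj; rewrite -zia -zjb.
Qed.

Lemma Hface_cubical i a : cubical_face (@Hface R n i a).
Proof.
exists [:: (i, a)]; split => //; split; last by exists (fun=> zval R a).
apply/seteqP; split=> z /=; first by move=> zia p [<-|].
by move=> /(_ (i, a)) zF; apply: zF; left.
Qed.

Lemma cubical_face_sub_Hn (A : set (Pn R n)) : cubical_face A -> A `<=` @Hn R n.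
Proof.
case=> F [F0 [-> _]] z; case: F F0 => [//|p F] _ /(_ p (or_introl erefl)) zp.
by exists p.1, p.2.
Qed.

Lemma cubical_face_eq_Hface (A : set (Pn R n)) z i a :
  cubical_face A -> A z -> ~ Hh z -> Hface i a z -> A = Hface i a.
Proof.
case=> F [F0 [-> _]]; case: F F0 => [//|p F] _ zA notHh zia.
have onlyia q : List.In q (p :: F) -> q = (i, a).
  by case: q => [j b] qF; exact: Hface_uniq notHh (zA _ qF) zia.
apply/seteqP; split=> w; first by move/(_ p (or_introl erefl)); rewrite (onlyia p) //; left.
by move=> wia q /onlyia ->.
Qed.

Definition Hface_list : seq (set (Pn R n)) :=
  [seq Hface ia.1 ia.2 | ia <- enum {: 'I_n * zinf}].

Lemma union_Hface_list : union_list Hface_list = @Hn R n.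
Proof.
apply/seteqP; split=> z.
  by case=> A /List.in_map_iff [[i a] [<- _]] zia; exists i, a.
case=> i [a zia]; exists (Hface i a) => //; apply/List.in_map_iff.
by exists (i, a); split => //; apply: mem_In; rewrite mem_enum.
Qed.

Lemma dP1_le_dPn z w i : dP1 (z i) (w i) <= dPn z w.
Proof. by rewrite /dPn (bigD1 i) //= lerDl sumr_ge0 // => j _; exact: dP1_ge0. Qed.

Lemma closed_Hface_path (f : R -> Pn R n) i a :
  cont_on (fun t u : R => `|t - u|) (@dPn R n) [set t | 0 <= t <= 1] f ->
  closed [set t | 0 <= t <= 1 /\ Hface i a (f t)].
Proof.
move=> cf; pose phi t := dP1 (f t i) (zval R a).
have -> : [set t | 0 <= t <= 1 /\ Hface i a (f t)] =
          [set t : R | 0 <= t <= 1] `&` phi @^-1` [set 0].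
  apply/seteqP; split=> t [t01 ft]; split => //; first by rewrite /= /phi ft dP1xx.
  exact: dP1_eq0.
apply: closed_zeroset; first by rewrite -set_itvcc; exact: itv_closed.
move=> t t01 e e0; have [d d0 near_t] := cf t t01 e e0.
exists d => // u u01 /(near_t u u01) ftu.
exact: le_lt_trans (dP1_lipschitz _ _ _) (le_lt_trans (dP1_le_dPn _ _ i) ftu).
Qed.

Lemma Hface_path_constant (f : R -> Pn R n) i a :
  cont_on (fun t u : R => `|t - u|) (@dPn R n) [set t | 0 <= t <= 1] f ->
  (forall t, 0 <= t <= 1 -> Hn (f t) /\ ~ Hh (f t)) ->
  Hface i a (f 0) -> Hface i a (f 1).
Proof.
move=> cf onHn fia0.
pose C (jb : 'I_n * zinf) := [set t | 0 <= t <= 1 /\ Hface jb.1 jb.2 (f t)].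
suff [] : C (i, a) 1 by [].
apply: (@itv01_closed_partition R _ C).
- by move=> jb; exact: closed_Hface_path.
- by move=> t t01; have [[j [b fjb]] _] := onHn t t01; exists (j, b).
- by move=> [j b] [k c] t [t01 fjb] [_ fkc]; exact: Hface_uniq (onHn t t01).2 fjb fkc.
- by split => //; rewrite lexx ler01.
Qed.

End Faces.

Section Triangulation.
Variables (R : realType) (n : nat) (V : finType).
Variables (K : {set {set V}}) (h : (V -> R) -> Pn R n).
Hypothesis good : good_triangulation K h.
Implicit Types (s t u : {set V}) (x y : V -> R).

Lemma full_subcomplex_Hn : is_full_subcomplex K h (@Hn R n).
Proof.
have [_ [_ [_ [full _]]]] := good; rewrite -union_Hface_list; apply: full.
by move=> A /List.in_map_iff [[i a] [<- _]]; exact: Hface_cubical.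
Qed.

Lemma Hn_common_face s x0 x1 : s \in K ->
  csimplex s x0 -> csimplex s x1 -> Hn (h x0) -> Hn (h x1) ->
  exists2 u, u \in K & [/\ u \subset s, csimplex u x0, csimplex u x1 &
    forall y, csimplex u y -> Hn (h y)].
Proof.
move=> sK sx0 sx1 Hx0 Hx1.
have [L [[LK [_ HnE]] Lfull]] := full_subcomplex_Hn.
have [[_ faceK] [hhomeo _]] := good.
have meets_L x : csimplex s x -> Hn (h x) -> exists2 t, t \in L & csimplex (s :&: t) x.
  move=> sx; rewrite HnE => -[t tL [y ty hyx]]; exists t => //.
  have tK : t \in K by exact: (fintype.subsetP LK).
  have xy : x = y by apply: homeo_inj hhomeo _ _ (esym hyx); [exists s|exists t].
  by apply: csimplexI sx _; rewrite xy.
have [t0 t0L st0x0] := meets_L _ sx0 Hx0.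
have [t1 t1L st1x1] := meets_L _ sx1 Hx1.
pose u := (s :&: t0) :|: (s :&: t1).
have ux0 : csimplex u x0 by apply: csimplexS st0x0; exact: finset.subsetUl.
have ux1 : csimplex u x1 by apply: csimplexS st1x1; exact: finset.subsetUr.
have us : u \subset s by rewrite finset.subUset !finset.subsetIl.
have uK : u \in K := faceK s u sK us (csimplex_neq0 ux0).
have uL : u \in L.
  apply: Lfull => // v; rewrite HnE !inE => /orP[] /andP[_ vt];
    [exists t0|exists t1] => //; exists (vertex_pt R v) => //; exact: csimplex_vertex.
by exists u => //; split => // y uy; rewrite HnE; exists u => //; exists y.
Qed.

Lemma simplex_Hn_one_face s z0 z1 i a : s \in K ->
  (forall z, simplex_img h s z -> ~ Hh z) ->
  simplex_img h s z0 -> Hface i a z0 ->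
  simplex_img h s z1 -> Hn z1 -> Hface i a z1.
Proof.
move=> sK offHh [x0 sx0 <-] x0ia [x1 sx1 <-] Hx1.
have Hx0 : Hn (h x0) by exists i, a.
have [u uK [us ux0 ux1 uHn]] := Hn_common_face sK sx0 sx1 Hx0 Hx1.
have [_ [[_ [_ [_ [hcont _]]]] _]] := good.
rewrite -(lerp1 x0 x1); apply: (@Hface_path_constant R n (h \o lerp x0 x1)).
- apply: cont_on_comp _ (cont_on_lerp ux0 ux1) hcont.
  by move=> t t01; exists u => //; exact: csimplex_lerp.
- move=> t t01; have ut := csimplex_lerp ux0 ux1 t01; split; first exact: uHn.
  by apply: offHh; exists (lerp x0 x1 t) => //; exact: csimplexS us ut.
- by rewrite /= lerp0.
Qed.

End Triangulation.

Theorem lemma4p8 (R : realType) (n : nat) (V : finType)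
    (K : {set {set V}}) (h : (V -> R) -> Pn R n) (s : {set V}) :
  good_triangulation K h ->
  s \in K ->
  (simplex_img h s `&` @Hn R n) !=set0 ->
  simplex_img h s `&` @Hh R n = set0 ->
  exists ia : 'I_n * zinf,
    (simplex_img h s `&` @Hn R n `<=` @Hface R n ia.1 ia.2) /\
    (forall jb : 'I_n * zinf,
        simplex_img h s `&` @Hn R n `<=` @Hface R n jb.1 jb.2 -> jb = ia) /\
    (forall H' : set (Pn R n), cubical_face H' ->
        H' <> @Hface R n ia.1 ia.2 -> simplex_img h s `&` H' = set0).
Proof.
move=> good sK [z0 [sz0 Hz0]] noHh.
have offHh z : simplex_img h s z -> ~ Hh z.
  by move=> sz Hhz; have : (simplex_img h s `&` @Hh R n) z by []; rewrite noHh.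
have [i [a z0ia]] := Hz0.
have onface z : simplex_img h s z -> Hn z -> Hface i a z.
  exact: (simplex_Hn_one_face good sK offHh sz0 z0ia).
exists (i, a); split; [|split].
- by move=> z [sz Hz]; exact: onface.
- by move=> [j b] /(_ z0 (conj sz0 Hz0)) z0jb; exact: Hface_uniq (offHh _ sz0) z0jb z0ia.
- move=> H' cubH' H'_neq; apply/seteqP; split=> [z [sz H'z]|//]; apply: H'_neq => /=.
  apply: (cubical_face_eq_Hface cubH' H'z (offHh _ sz)).
  exact: onface sz (cubical_face_sub_Hn cubH' H'z).
Qed.
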